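(* Suppose $f$ is continuously differentiable with $\nabla f$ Lipschitz continuous with constant $L_{\nabla f}$. Let $\boldsymbol{x}^0\in\mathcal{C}$, $p\le n$, $\boldsymbol{D}\in\mathbb{R}^{n\times p}$ of full column rank with QR-factorization $\boldsymbol{D}=\boldsymbol{Q}\boldsymbol{R}$, $\boldsymbol{R}=[\boldsymbol{r}_1\cdots\boldsymbol{r}_p]$, $\overline{\mathrm{diam}}(\boldsymbol{R})=\max_{1\le i\le p}\|\boldsymbol{r}_i\|$ and $\widehat{\boldsymbol{R}}=\boldsymbol{R}/\overline{\mathrm{diam}}(\boldsymbol{R})$. Then for all $\widehat{\boldsymbol{s}}\in\boldsymbol{Q}^\top(\mathcal{C}-\boldsymbol{x}^0)$ with $\|\widehat{\boldsymbol{s}}\|\le\overline{\mathrm{diam}}(\boldsymbol{R})$, $$\max_{\substack{\boldsymbol{d}\in\boldsymbol{Q}^\top(\mathcal{C}-\boldsymbol{x}^0)\\\|\boldsymbol{d}\|\le1}}\left|\left(\boldsymbol{Q}^\top\nabla f(\boldsymbol{x}^0+\boldsymbol{Q}\widehat{\boldsymbol{s}})-\nabla\widehat m(\widehat{\boldsymbol{s}})\right)^\top\boldsymbol{d}\right|\le\left(\tfrac12L_{\nabla f}\left(2+\sqrt{p}\,\|\widehat{\boldsymbol{R}}^{-1}\|_{\boldsymbol{x}^0,\mathcal{C},\boldsymbol{D}}\right)\right)\overline{\mathrm{diam}}(\boldsymbol{R})$$ and $$\left|f(\boldsymbol{x}^0+\boldsymbol{Q}\widehat{\boldsymbol{s}})-\widehat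 m(\widehat{\boldsymbol{s}})\right|\le\left(\tfrac12L_{\nabla f}\left(1+\sqrt{p}\,\|\widehat{\boldsymbol{R}}^{-1}\|_{\boldsymbol{x}^0,\mathcal{C},\boldsymbol{D}}\right)\right)\overline{\mathrm{diam}}(\boldsymbol{R})^2.$$ In particular, $\widehat m$ belongs to a class of $(\mathcal{C},\boldsymbol{Q})$-fully linear models of $f$ at $\boldsymbol{x}^0$ parametrized by $\overline{\mathrm{diam}}(\boldsymbol{R})$, with constants $\kappa_{ef}=\frac12L_{\nabla f}(1+\sqrt{p}\|\widehat{\boldsymbol{R}}^{-1}\|_{\boldsymbol{x}^0,\mathcal{C},\boldsymbol{D}})$ and $\kappa_{eg}=\frac12L_{\nabla f}(2+\sqrt{p}\|\widehat{\boldsymbol{R}}^{-1}\|_{\boldsymbol{x}^0,\mathcal{C},\boldsymbol{D}})$.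
   Context: $f:\mathbb{R}^n\to\mathbb{R}$ and $\mathcal{C}\subseteq\mathbb{R}^n$ is closed, convex, with nonempty interior. $\|\cdot\|$ is the Euclidean norm for vectors and spectral norm for matrices. QR-factorization $\boldsymbol{D}=\boldsymbol{Q}\boldsymbol{R}$: $\boldsymbol{Q}\in\mathbb{R}^{n\times p}$ with orthonormal columns, $\boldsymbol{R}\in\mathbb{R}^{p\times p}$ (invertible since $\boldsymbol{D}$ has full column rank). $\boldsymbol{Q}^\top(\mathcal{C}-\boldsymbol{x})=\{\boldsymbol{Q}^\top(\boldsymbol{z}-\boldsymbol{x}):\boldsymbol{z}\in\mathcal{C}\}$. Let $\widehat f(\widehat{\boldsymbol{s}})=f(\boldsymbol{x}^0+\boldsymbol{Q}\widehat{\boldsymbol{s}})$ and $\widehat m(\widehat{\boldsymbol{s}})=\widehat f(\boldsymbol{0}_p)+\nabla_S\widehat f(\boldsymbol{0}_p;\boldsymbol{R})^\top\widehat{\boldsymbol{s}}$, where the generalized simplex gradient is $\nabla_S\widehat f(\boldsymbol{0}_p;\boldsymbol{R})=(\boldsymbol{R}^\top)^\dagger\boldsymbol{\delta}$ with $\boldsymbol{\delta}_i=\widehat f(\boldsymbol{r}_i)-\widehat f(\boldsymbol{0}_p)$ and $\dagger$ the Moore–Penrose pseudoinverse. Geometry measure: for $\boldsymbol{M}\in\mathbb{R}^{m\times p}$, $\|\boldsymbol{M}\|_{\boldsymbol{x}^0,\mathcal{C},\boldsymbol{D}}=\frac{1}{\min\{\overline{\mathrm{diam}}(\boldsymbol{R}),1\}}\max\{\|\boldsymbol{M}\boldsymbol{w}\|:\boldsymbol{w}\in\boldsymbol{Q}^\top(\mathcal{C}-\boldsymbol{x}^0),\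 \|\boldsymbol{w}\|\le\min\{\overline{\mathrm{diam}}(\boldsymbol{R}),1\}\}$. Definition: given $\overline\Delta>0$, $\boldsymbol{x}\in\mathcal{C}$, continuously differentiable $f$ and $\boldsymbol{Q}\in\mathbb{R}^{n\times p}$ with orthonormal columns, a family $\{\widehat m_\Delta:\mathbb{R}^p\to\mathbb{R}\}_{\Delta\in(0,\overline\Delta]}$ is a class of $(\mathcal{C},\boldsymbol{Q})$-fully linear models of $f$ at $\boldsymbol{x}$ parameterized by $\Delta$ if there exist $\kappa_{ef},\kappa_{eg}>0$ such that for all $\Delta\in(0,\overline\Delta]$ and $\widehat{\boldsymbol{s}}\in\boldsymbol{Q}^\top(\mathcal{C}-\boldsymbol{x})$ with $\|\widehat{\boldsymbol{s}}\|\le\Delta$: $|f(\boldsymbol{x}+\boldsymbol{Q}\widehat{\boldsymbol{s}})-\widehat m_\Delta(\widehat{\boldsymbol{s}})|\le\kappa_{ef}\Delta^2$ and $\max_{\boldsymbol{d}\in\boldsymbol{Q}^\top(\mathcal{C}-\boldsymbol{x}),\|\boldsymbol{d}\|\le1}|(\boldsymbol{Q}^\top\nabla f(\boldsymbol{x}+\boldsymbol{Q}\widehat{\boldsymbol{s}})-\nabla\widehat m_\Delta(\widehat{\boldsymbol{s}}))^\top\boldsymbol{d}|\le\kappa_{eg}\Delta$. *)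

From HB Require Import structures.
From mathcomp Require Import all_boot all_order all_algebra.
From mathcomp Require Import all_classical all_reals all_analysis.
Set Implicit Arguments. Unset Strict Implicit. Unset Printing Implicit Defensive.
Import Order.TTheory GRing.Theory Num.Theory.
Import numFieldNormedType.Exports.
Local Open Scope classical_set_scope.
Local Open Scope ring_scope.

Section Defs.
Variable R : realType.

Definition dotv (n : nat) (u v : 'cV[R]_n) : R := \sum_(i < n) u i 0 * v i 0.
Definition enorm (n : nat) (v : 'cV[R]_n) : R := Num.sqrt (dotv v v).

Definition is_gradient (n : nat) (f : 'cV[R]_n -> R) (g : 'cV[R]_n -> 'cV[R]_n) :=
  forall x : 'cV[R]_n, differentiable f x /\ forall h, 'd f x h = dotv (g x) h.

Definition lipschitz_euclid (n : nat) (g : 'cV[R]_n -> 'cV[R]_n) (L : R) :=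
  forall x y, enorm (g x - g y) <= L * enorm (x - y).

Definition orthonormal_cols (n p : nat) (Q : 'M[R]_(n, p)) := Q^T *m Q = 1%:M.

Definition projset (n p : nat) (Q : 'M[R]_(n, p)) (C : set 'cV[R]_n) (x : 'cV[R]_n)
  : set 'cV[R]_p := [set Q^T *m (z - x) | z in C].

(* diam-bar(R) = max_i ||r_i|| over the columns r_i of R (0 if p = 0). *)
Definition diamR (p : nat) (Rm : 'M[R]_p) : R := \big[Num.max/0]_(i < p) enorm (col i Rm).

(* Moore--Penrose pseudoinverse: the (unique) X satisfying the four Penrose
   equations (chosen classically). *)
Definition penrose (m k : nat) (A : 'M[R]_(m, k)) (X : 'M[R]_(k, m)) : Prop :=
  [/\ A *m X *m A = A, X *m A *m X = X, (A *m X)^T = A *m X & (X *m A)^T = X *m A].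
Definition mp_pinv (m k : nat) (A : 'M[R]_(m, k)) : 'M[R]_(k, m) := xget 0 (penrose A).

Definition fhat (n p : nat) (f : 'cV[R]_n -> R) (x0 : 'cV[R]_n) (Q : 'M[R]_(n, p))
  (s : 'cV[R]_p) : R := f (x0 + Q *m s).

Definition simplex_grad (n p : nat) (f : 'cV[R]_n -> R) (x0 : 'cV[R]_n)
  (Q : 'M[R]_(n, p)) (Rm : 'M[R]_p) : 'cV[R]_p :=
  mp_pinv Rm^T *m \col_(i < p) (fhat f x0 Q (col i Rm) - fhat f x0 Q 0).

(* the linear model mhat(s) = fhat(0) + grad_S^T s ; its gradient is grad_S *)
Definition mhat (n p : nat) (f : 'cV[R]_n -> R) (x0 : 'cV[R]_n)
  (Q : 'M[R]_(n, p)) (Rm : 'M[R]_p) (s : 'cV[R]_p) : R :=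
  fhat f x0 Q 0 + dotv (simplex_grad f x0 Q Rm) s.

(* geometry measure ||M||_{x0,C,D} (the max is taken as a supremum) *)
Definition geom_measure (n p m : nat) (C : set 'cV[R]_n) (x0 : 'cV[R]_n)
  (Q : 'M[R]_(n, p)) (Rm : 'M[R]_p) (M : 'M[R]_(m, p)) : R :=
  let r := Num.min (diamR Rm) 1 in
  r^-1 * sup [set enorm (M *m w) | w in [set w | projset Q C x0 w /\ enorm w <= r]].

End Defs.

From HB Require Import structures.
From mathcomp Require Import all_boot all_order all_algebra.
From mathcomp Require Import all_classical all_reals all_analysis.
From mathcomp Require Import ring lra.
Import Order.TTheory GRing.Theory Num.Theory.
Import numFieldNormedType.Exports.
Local Open Scope classical_set_scope.
Local Open Scope ring_scope.

Set Implicit Arguments.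
Unset Strict Implicit.

(* Write g0 := Q^T grad f(x0). Each simplex difference fhat(r_i) - fhat(0)
   equals g0.r_i up to a linearization error e_i, and |e_i| <= L/2 diam^2 by
   the descent lemma. Full column rank of D makes R invertible, so the
   pseudoinverse of R^T is R^-T and grad_S - g0 = R^-T e. Hence for every w,
   |(grad_S - g0).w| <= |e| |R^-1 w| <= sqrt(p) L/2 diam |Rhat^-1 w|, and on the
   star-shaped set Q^T(C - x0) the last factor is at most |w| times the
   geometry measure of Rhat^-1. The gradient bound adds the Lipschitz change
   L |s| of Q^T grad f between x0 and x0 + Q s; the value bound adds the
   linearization error L/2 |s|^2 of f at x0. *)

Section EuclideanNorm.
Variables (R : realType) (n : nat).
Implicit Types u v w : 'cV[R]_n.

Lemma dotvE u v : dotv u v = (u^T *m v) 0 0.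
Proof. by rewrite /dotv mxE; apply: eq_bigr => i _; rewrite mxE. Qed.

Lemma dotvC u v : dotv u v = dotv v u.
Proof. by rewrite /dotv; apply: eq_bigr => i _; rewrite mulrC. Qed.

Lemma dotvDl u v w : dotv (u + v) w = dotv u w + dotv v w.
Proof. by rewrite /dotv -big_split; apply: eq_bigr => i _; rewrite mxE mulrDl. Qed.

Lemma dotvZl a u v : dotv (a *: u) v = a * dotv u v.
Proof. by rewrite /dotv mulr_sumr; apply: eq_bigr => i _; rewrite mxE mulrA. Qed.

Lemma dotvNl u v : dotv (- u) v = - dotv u v.
Proof. by rewrite -scaleN1r dotvZl mulN1r. Qed.

Lemma dotvBl u v w : dotv (u - v) w = dotv u w - dotv v w.
Proof. by rewrite dotvDl dotvNl. Qed.

Lemma dotvDr u v w : dotv w (u + v) = dotv w u + dotv w v.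
Proof. by rewrite dotvC dotvDl !(dotvC w). Qed.

Lemma dotvZr a u v : dotv v (a *: u) = a * dotv v u.
Proof. by rewrite dotvC dotvZl dotvC. Qed.

Lemma dotvNr u v : dotv v (- u) = - dotv v u.
Proof. by rewrite dotvC dotvNl dotvC. Qed.

Lemma dotvBr u v w : dotv w (u - v) = dotv w u - dotv w v.
Proof. by rewrite dotvDr dotvNr. Qed.

Lemma dotv0l v : dotv 0 v = 0.
Proof. by rewrite -(scale0r 0) dotvZl mul0r. Qed.

Lemma dotvv_ge0 u : 0 <= dotv u u.
Proof. by apply: sumr_ge0 => i _; rewrite -expr2 sqr_ge0. Qed.

Lemma dotvv_eq0 u : (dotv u u == 0) = (u == 0).
Proof.
apply/idP/eqP => [|->]; last by rewrite dotv0l.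
rewrite psumr_eq0 => [/allP u0|i _]; last by rewrite -expr2 sqr_ge0.
apply/matrixP => i j; rewrite (ord1 j) mxE.
by have /implyP/(_ isT) := u0 i (mem_index_enum _); rewrite -expr2 sqrf_eq0 => /eqP.
Qed.

Lemma enorm_ge0 u : 0 <= enorm u.
Proof. exact: sqrtr_ge0. Qed.

Lemma enorm_sqr u : enorm u ^+ 2 = dotv u u.
Proof. by rewrite sqr_sqrtr // dotvv_ge0. Qed.

Lemma enorm_eq0 u : (enorm u == 0) = (u == 0).
Proof. by rewrite -dotvv_eq0 -enorm_sqr sqrf_eq0. Qed.

Lemma enormZ a u : enorm (a *: u) = `|a| * enorm u.
Proof. by rewrite /enorm dotvZl dotvZr mulrA -expr2 sqrtrM ?sqr_ge0 // sqrtr_sqr. Qed.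

(* Expanding 0 <= |b u -+ a v|^2 with a = |u|, b = |v| gives |a b d| <= (a b)^2 for d = u.v. *)
Lemma cauchy_schwarz u v : `|dotv u v| <= enorm u * enorm v.
Proof.
set a := enorm u; set b := enorm v; set d := dotv u v.
have [a0 b0] : 0 <= a /\ 0 <= b by split; apply: enorm_ge0.
have Hm := dotvv_ge0 (b *: u - a *: v); have Hp := dotvv_ge0 (b *: u + a *: v).
rewrite !(dotvDl, dotvBl, dotvDr, dotvBr, dotvNl, dotvNr, dotvZl, dotvZr) in Hm Hp.
rewrite -!enorm_sqr -/a -/b (dotvC v u) -/d in Hm Hp.
have [ab0|ab_neq0] := eqVneq (a * b) 0.
  move: ab0 => /eqP; rewrite mulf_eq0 !enorm_eq0 => /orP[]/eqP zero.
    by rewrite /d zero dotv0l normr0 mulr_ge0.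
  by rewrite /d zero dotvC dotv0l normr0 mulr_ge0.
have ab_gt0 : 0 < a * b by rewrite lt_def ab_neq0 mulr_ge0.
by rewrite ler_norml; apply/andP; split; nra.
Qed.

Lemma normr_coord_le_enorm v i : `|v i 0| <= enorm v.
Proof.
rewrite -(sqrtr_sqr (v i 0)) /enorm ler_sqrt ?dotvv_ge0 //.
rewrite /dotv (bigD1 i) //= -expr2 lerDl.
by apply: sumr_ge0 => j _; rewrite -expr2 sqr_ge0.
Qed.

Lemma enorm_le_sqrt_dim v B : 0 <= B -> (forall i, `|v i 0| <= B) ->
  enorm v <= Num.sqrt n%:R * B.
Proof.
move=> B0 vB; rewrite -(ger0_norm B0) -sqrtr_sqr -sqrtrM ?ler0n // /enorm.
rewrite ler_sqrt ?mulr_ge0 ?ler0n ?sqr_ge0 //.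
apply: le_trans (_ : \sum_(i < n) B ^+ 2 <= _); last by rewrite sumr_const card_ord mulr_natl.
rewrite /dotv ler_sum // => i _.
rewrite -expr2 -real_normK ?num_real //; have := vB i; have := normr_ge0 (v i 0); nra.
Qed.

End EuclideanNorm.

Section OrthonormalColumns.
Variables (R : realType) (n p : nat) (Q : 'M[R]_(n, p)).

Lemma dotv_trmxl a b : dotv (Q^T *m a) b = dotv a (Q *m b).
Proof. by rewrite !dotvE trmx_mul trmxK mulmxA. Qed.

Hypothesis Q_orth : orthonormal_cols Q.

Lemma dotv_orthonormal u v : dotv (Q *m u) (Q *m v) = dotv u v.
Proof. by rewrite -dotv_trmxl mulmxA Q_orth mul1mx. Qed.

Lemma enorm_orthonormal u : enorm (Q *m u) = enorm u.
Proof. by rewrite /enorm dotv_orthonormal. Qed.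

Lemma enorm_trmx_orthonormal_le v : enorm (Q^T *m v) <= enorm v.
Proof.
have Qv_ge0 := enorm_ge0 (Q^T *m v).
have : enorm (Q^T *m v) ^+ 2 <= enorm v * enorm (Q^T *m v).
  rewrite enorm_sqr dotv_trmxl dotvC -[X in _ <= _ * X]enorm_orthonormal mulrC.
  exact: le_trans (ler_norm _) (cauchy_schwarz _ _).
have := enorm_ge0 v; nra.
Qed.

End OrthonormalColumns.

Lemma enorm_mulmx_le (R : realType) m p (M : 'M[R]_(m, p)) w :
  enorm (M *m w) <= Num.sqrt m%:R * ((\sum_i \sum_j `|M i j|) * enorm w).
Proof.
have sumM_ge0 : 0 <= \sum_i \sum_j `|M i j| by do 2!apply: sumr_ge0 => ? _.
apply: enorm_le_sqrt_dim => [|i]; first by rewrite mulr_ge0 ?enorm_ge0.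
rewrite mxE; apply: le_trans (ler_norm_sum _ _ _) _.
apply: le_trans (_ : \sum_j `|M i j| * enorm w <= _).
  by apply: ler_sum => j _; rewrite normrM ler_wpM2l ?normr_coord_le_enorm.
rewrite -mulr_suml ler_wpM2r ?enorm_ge0 // (bigD1 i) //= lerDl.
by apply: sumr_ge0 => k _; rewrite sumr_ge0.
Qed.

Lemma lipschitz_euclid_ge0 (R : realType) n (g : 'cV[R]_n -> 'cV[R]_n) L :
  (0 < n)%N -> lipschitz_euclid g L -> 0 <= L.
Proof.
move=> n_gt0 gL; pose x : 'cV[R]_n := const_mx 1.
have x_gt0 : 0 < enorm x.
  rewrite lt_def enorm_ge0 enorm_eq0 andbT; apply: contraTneq isT => /matrixP.
  by move=> /(_ (Ordinal n_gt0) 0); rewrite !mxE => /eqP; rewrite oner_eq0.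
have := gL x 0; rewrite subr0; have := enorm_ge0 (g x - g 0); nra.
Qed.

Section DescentLemma.
Variables (R : realType) (n : nat).
Variables (f : 'cV[R]_n -> R) (g : 'cV[R]_n -> 'cV[R]_n) (L : R).
Hypotheses (fg : is_gradient f g) (gL : lipschitz_euclid g L).

(* The difference quotients of the line function at t are those of f at x + t h in direction h. *)
Lemma is_derive_along_line x h (t : R) :
  is_derive t 1 (fun t => f (x + t *: h)) (dotv (g (x + t *: h)) h).
Proof.
have [df dfE] := fg (x + t *: h).
have E : (fun k : R => k^-1 *: (((fun t => f (x + t *: h)) \o shift t) (k *: 1) - f (x + t *: h)))
  = (fun k : R => k^-1 *: ((f \o shift (x + t *: h)) (k *: h) - f (x + t *: h))).
  apply: funext => k /=; rewrite /shift; congr (_ *: (f _ - _)).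
  by rewrite [k%:A]mulr1 scalerDl addrCA addrC.
split; first by rewrite /derivable E; exact: diff_derivable.
by rewrite /derive E -/(derive f (x + t *: h) h) deriveE // dfE.
Qed.

Lemma dotv_gradient_increment_le x h (t : R) : 0 <= t ->
  `|dotv (g (x + t *: h) - g x) h| <= L * t * enorm h ^+ 2.
Proof.
move=> t_ge0; apply: le_trans (cauchy_schwarz _ _) _.
have := gL (x + t *: h) x; rewrite addrAC subrr add0r enormZ ger0_norm // => gLx.
rewrite (_ : L * t * _ = L * (t * enorm h) * enorm h); last by ring.
by rewrite ler_wpM2r ?enorm_ge0.
Qed.

(* For e = 1 and e = -1, psi t := e (f (x + t h) - t g(x).h) - t^2 K is
   nonincreasing on [0, 1]: its derivative is at most L t |h|^2 - 2 t K = 0. *)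
Lemma descent_lemma x h :
  `|f (x + h) - f x - dotv (g x) h| <= 2^-1 * L * enorm h ^+ 2.
Proof.
set c := dotv (g x) h; set K := 2^-1 * L * enorm h ^+ 2.
suff one_sided e : e = 1 \/ e = -1 -> e * (f (x + h) - f x - c) <= K.
  rewrite ler_norml; have := one_sided 1 (or_introl erefl).
  by have := one_sided (-1) (or_intror erefl); lra.
move=> e_sign.
pose psi := e \*: ((fun t => f (x + t *: h)) - id * cst c) - (id ^+ 2) * cst K.
have psi_derive t : is_derive t (1 : R) psi
    (e * (dotv (g (x + t *: h)) h - c) - (2 * t) * K).
  have := is_derive_along_line x h t => f_derive.
  apply: is_derive_eq; rewrite !scaler0 !add0r /cst /= /GRing.scale /= !mulr1 expr1.
  ring.
have psi_derivable t : derivable psi t 1 by have [] := psi_derive t.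
have psi_nonincr : {in `]0, 1[, forall t, derive1 psi t <= 0}.
  move=> t; rewrite in_itv /= => /andP[t_gt0 _]; rewrite derive1E derive_val.
  have : e * (dotv (g (x + t *: h)) h - c) <= `|dotv (g (x + t *: h) - g x) h|.
    by rewrite dotvBl -/c; case: e_sign => ->; rewrite ?mul1r ?mulN1r ?ler_normr lexx ?orbT.
  have := dotv_gradient_increment_le x h (ltW t_gt0); rewrite /K; nra.
have psi_cont : {within `[0, 1], continuous psi}.
  by apply: derivable_within_continuous => t _; exact: psi_derivable.
have := ler0_derive1_le_cc (fun t _ => psi_derivable t) psi_nonincr psi_cont.
move=> /(_ 1 0); rewrite !in_itv /= !lexx ler01 => /(_ isT isT isT).
have psiE t : psi t = e * (f (x + t *: h) - t * c) - t ^+ 2 * K by [].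
rewrite !psiE scale0r scale1r addr0 !mul0r expr1n mul1r expr0n mul0r !subr0.
lra.
Qed.

End DescentLemma.

Section GeometryMeasure.
Variables (R : realType) (n p : nat) (C : set 'cV[R]_n) (x0 : 'cV[R]_n).
Variables (Q : 'M[R]_(n, p)) (Rm : 'M[R]_p).
Hypotheses (C_convex : convex_set C) (Cx0 : C x0).

Lemma projset_scale w t : projset Q C x0 w -> 0 <= t -> t <= 1 ->
  projset Q C x0 (t *: w).
Proof.
move=> [z Cz <-] t_ge0 t_le1.
have /set_mem Ctz := C_convex (Itv01 t_ge0 t_le1) (mem_set Cz) (mem_set Cx0).
exists (t *: z + (1 - t) *: x0); first exact: Ctz.
rewrite scalemxAr scalerBl scale1r scalerBr; congr (_ *m _).
by rewrite addrCA addrAC subrr add0r.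
Qed.

(* Rescaling w by min(diam, 1)/rho keeps it in the star-shaped set Q^T(C - x0)
   and puts it in the ball over which the geometry measure takes its supremum. *)
Lemma enorm_mulmx_le_geom_measure m (M : 'M[R]_(m, p)) w rho :
  0 < diamR Rm -> projset Q C x0 w -> enorm w <= rho -> Num.min (diamR Rm) 1 <= rho ->
  enorm (M *m w) <= rho * geom_measure C x0 Q Rm M.
Proof.
rewrite /geom_measure /=; set r := Num.min _ _ => diam_gt0 Pw w_le r_le.
have r_gt0 : 0 < r by rewrite lt_min diam_gt0 ltr01.
have rho_gt0 : 0 < rho := lt_le_trans r_gt0 r_le.
have t_ge0 : 0 <= r / rho by rewrite divr_ge0 ?ltW.
have t_le1 : r / rho <= 1 by rewrite ler_pdivrMr // mul1r.
have tw_le : enorm ((r / rho) *: w) <= r.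
  rewrite enormZ ger0_norm //.
  by apply: le_trans (ler_wpM2l t_ge0 w_le) _; rewrite divfK ?gt_eqF.
have bounded : has_ubound [set enorm (M *m v) | v in
    [set v | projset Q C x0 v /\ enorm v <= r]].
  exists (Num.sqrt m%:R * ((\sum_i \sum_j `|M i j|) * r)) => _ [v [_ v_le] <-].
  apply: le_trans (enorm_mulmx_le _ _) _.
  rewrite ler_wpM2l ?sqrtr_ge0 // ler_wpM2l //.
  by do 2!apply: sumr_ge0 => ? _.
have := ub_le_sup bounded (ex_intro2 _ _ _ (conj (projset_scale Pw t_ge0 t_le1) tw_le) erefl).
rewrite -scalemxAr enormZ ger0_norm // mulrA -ler_pdivrMl ?divr_gt0 //.
by rewrite invf_div.
Qed.

End GeometryMeasure.

Lemma mp_pinv_unitmx (R : realType) m (A : 'M[R]_m) :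
  A \in unitmx -> mp_pinv A = invmx A.
Proof.
move=> A_unit; have : penrose A (mp_pinv A).
  apply: (@xgetI _ 0 _ (invmx A)).
  by split; rewrite ?mulmxV ?mulVmx ?mul1mx ?trmx1.
case=> AXA _ _ _.
have := congr1 (fun M => invmx A *m M *m invmx A) AXA.
by rewrite /= !mulmxA mulVmx // mul1mx -mulmxA mulmxV // mulmx1 mul1mx.
Qed.

Lemma unitmx_rank_mulmx (R : realType) n p (Q : 'M[R]_(n, p)) (Rm : 'M[R]_p) :
  \rank (Q *m Rm) = p -> Rm \in unitmx.
Proof.
move=> rk; rewrite -row_free_unit /row_free eqn_leq rank_leq_col /= -{1}rk.
exact: mxrankM_maxr.
Qed.

Lemma col_enorm_le_diamR (R : realType) p (Rm : 'M[R]_p) i :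
  enorm (col i Rm) <= diamR Rm.
Proof. exact: le_bigmax. Qed.

Lemma diamR_gt0 (R : realType) p (Rm : 'M[R]_p) : Rm != 0 -> 0 < diamR Rm.
Proof.
apply: contraNT; rewrite -leNgt => diam_le0; apply/eqP/matrixP => i j.
have /eqP : enorm (col j Rm) = 0.
  by apply/le_anti; rewrite enorm_ge0 (le_trans (col_enorm_le_diamR _ _)).
by rewrite enorm_eq0 => /eqP/matrixP/(_ i 0); rewrite !mxE.
Qed.

Section SimplexGradient.
Variables (R : realType) (n p : nat).
Variables (f : 'cV[R]_n -> R) (g : 'cV[R]_n -> 'cV[R]_n) (L : R).
Variables (C : set 'cV[R]_n) (x0 : 'cV[R]_n) (Q : 'M[R]_(n, p)) (Rm : 'M[R]_p).
Hypotheses (fg : is_gradient f g) (gL : lipschitz_euclid g L) (L_ge0 : 0 <= L).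
Hypotheses (Q_orth : orthonormal_cols Q) (Rm_unit : Rm \in unitmx).
Hypothesis diam_gt0 : 0 < diamR Rm.
Hypotheses (C_convex : convex_set C) (Cx0 : C x0).

Local Notation diam := (diamR Rm).
Local Notation sg := (simplex_grad f x0 Q Rm).
Local Notation Gm := (geom_measure C x0 Q Rm (invmx (diam^-1 *: Rm))).

Let diam_ge0 : 0 <= diam := ltW diam_gt0.

Let half_L_ge0 : 0 <= 2^-1 * L.
Proof. by rewrite mulr_ge0 // invr_ge0 ler0n. Qed.

Lemma simplex_gradE : sg = Q^T *m g x0 + invmx Rm^T *m
  \col_i (f (x0 + Q *m col i Rm) - f x0 - dotv (g x0) (Q *m col i Rm)).
Proof.
have RmT_unit : Rm^T \in unitmx by rewrite unitmx_tr.
rewrite /simplex_grad mp_pinv_unitmx // -[X in _ = X + _]mul1mx.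
rewrite -(mulVmx RmT_unit) -mulmxA -mulmxDr; congr (_ *m _).
apply/matrixP => i j; rewrite !mxE (ord1 j) /fhat mulmx0 addr0 -dotv_trmxl.
rewrite [in RHS]/dotv (eq_bigr (fun k => (Q^T *m g x0) k 0 * col i Rm k 0)).
  by rewrite addrC subrK.
by move=> k _; rewrite !mxE mulrC.
Qed.

Lemma simplex_grad_error_le w :
  `|dotv (sg - Q^T *m g x0) w|
    <= Num.sqrt p%:R * (2^-1 * L * diam) * enorm (invmx (diam^-1 *: Rm) *m w).
Proof.
rewrite simplex_gradE addrC addKr -trmx_inv dotv_trmxl.
apply: le_trans (cauchy_schwarz _ _) _.
set B := 2^-1 * L * diam ^+ 2.
have B_ge0 : 0 <= B by rewrite /B mulr_ge0 ?sqr_ge0.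
have residual_le : enorm (\col_i (f (x0 + Q *m col i Rm) - f x0
    - dotv (g x0) (Q *m col i Rm))) <= Num.sqrt p%:R * B.
  apply: enorm_le_sqrt_dim => // i; rewrite mxE.
  apply: le_trans (descent_lemma fg gL _ _) _.
  rewrite enorm_orthonormal // ler_wpM2l //.
  by rewrite ler_sqr ?nnegrE ?enorm_ge0 ?col_enorm_le_diamR.
have invRmE : enorm (invmx Rm *m w) = diam^-1 * enorm (invmx (diam^-1 *: Rm) *m w).
  rewrite invmxZ ?unitmxZ ?unitfE ?invr_eq0 ?gt_eqF // invrK -scalemxAl enormZ.
  by rewrite gtr0_norm // mulKf ?gt_eqF.
rewrite invRmE; set v := enorm (invmx (diam^-1 *: Rm) *m w).
rewrite (_ : _ * _ * v = Num.sqrt p%:R * B * (diam^-1 * v)).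
  by rewrite ler_wpM2r ?mulr_ge0 ?invr_ge0 ?enorm_ge0.
by rewrite /B; field; rewrite gt_eqF.
Qed.

Lemma simplex_grad_error_le_geom w rho :
  projset Q C x0 w -> enorm w <= rho -> Num.min diam 1 <= rho ->
  `|dotv (sg - Q^T *m g x0) w| <= Num.sqrt p%:R * (2^-1 * L * diam) * (rho * Gm).
Proof.
move=> Pw w_le r_le; apply: le_trans (simplex_grad_error_le w) _.
rewrite ler_wpM2l ?mulr_ge0 ?sqrtr_ge0 //.
exact: enorm_mulmx_le_geom_measure.
Qed.

Lemma model_gradient_error_le s d :
  enorm s <= diam -> projset Q C x0 d -> enorm d <= 1 ->
  `|dotv (Q^T *m g (x0 + Q *m s) - sg) d| <= 2^-1 * L * (2 + Num.sqrt p%:R * Gm) * diam.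
Proof.
move=> s_le Pd d_le1.
have -> : Q^T *m g (x0 + Q *m s) - sg =
    Q^T *m (g (x0 + Q *m s) - g x0) - (sg - Q^T *m g x0).
  by rewrite mulmxBr opprB addrA subrK.
have gradient_change : `|dotv (Q^T *m (g (x0 + Q *m s) - g x0)) d| <= L * diam.
  apply: le_trans (cauchy_schwarz _ _) _.
  apply: le_trans (_ : enorm (g (x0 + Q *m s) - g x0) * 1 <= _).
    by rewrite ler_pM ?enorm_ge0 ?enorm_trmx_orthonormal_le.
  rewrite mulr1; apply: le_trans (gL _ _) _.
  by rewrite addrAC subrr add0r enorm_orthonormal // ler_wpM2l.
have min_le1 : Num.min diam 1 <= 1 by rewrite ge_min lexx orbT.
have model_error := simplex_grad_error_le_geom Pd d_le1 min_le1.
rewrite dotvBl; apply: le_trans (ler_normB _ _) _.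
rewrite mul1r in model_error; lra.
Qed.

Lemma model_value_error_le s :
  projset Q C x0 s -> enorm s <= diam ->
  `|f (x0 + Q *m s) - mhat f x0 Q Rm s| <= 2^-1 * L * (1 + Num.sqrt p%:R * Gm) * diam ^+ 2.
Proof.
move=> Ps s_le.
have -> : f (x0 + Q *m s) - mhat f x0 Q Rm s =
    (f (x0 + Q *m s) - f x0 - dotv (g x0) (Q *m s)) - dotv (sg - Q^T *m g x0) s.
  by rewrite /mhat /fhat mulmx0 addr0 dotvBl -dotv_trmxl; ring.
have taylor_error : `|f (x0 + Q *m s) - f x0 - dotv (g x0) (Q *m s)| <= 2^-1 * L * diam ^+ 2.
  apply: le_trans (descent_lemma fg gL _ _) _.
  rewrite enorm_orthonormal // ler_wpM2l //.
  by rewrite ler_sqr ?nnegrE ?enorm_ge0.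
have min_le_diam : Num.min diam 1 <= diam by rewrite ge_min lexx.
have model_error := simplex_grad_error_le_geom Ps s_le min_le_diam.
apply: le_trans (ler_normB _ _) _.
rewrite (_ : _ * _ * diam ^+ 2 = 2^-1 * L * diam ^+ 2
  + Num.sqrt p%:R * (2^-1 * L * diam) * (diam * Gm)); last by ring.
exact: lerD.
Qed.

End SimplexGradient.

Theorem mainTheorem5 (R : realType) (n p : nat)
  (f : 'cV[R]_n -> R) (gradf : 'cV[R]_n -> 'cV[R]_n) (Lg : R)
  (C : set 'cV[R]_n) (x0 : 'cV[R]_n)
  (D Q : 'M[R]_(n, p)) (Rm : 'M[R]_p) :
  is_gradient f gradf ->
  lipschitz_euclid gradf Lg ->
  closed C -> convex_set C -> interior C !=set0 ->
  C x0 ->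
  (p <= n)%N ->
  \rank D = p ->
  orthonormal_cols Q -> D = Q *m Rm ->
  let Rhat := (diamR Rm)^-1 *: Rm in
  let Gm := geom_measure C x0 Q Rm (invmx Rhat) in
  forall s : 'cV[R]_p, projset Q C x0 s -> enorm s <= diamR Rm ->
    (forall d : 'cV[R]_p, projset Q C x0 d -> enorm d <= 1 ->
       `| dotv (Q^T *m gradf (x0 + Q *m s) - simplex_grad f x0 Q Rm) d |
         <= (2^-1 * Lg * (2 + Num.sqrt p%:R * Gm)) * diamR Rm)
    /\
    `| f (x0 + Q *m s) - mhat f x0 Q Rm s |
         <= (2^-1 * Lg * (1 + Num.sqrt p%:R * Gm)) * diamR Rm ^+ 2.
Proof.
move=> fg gL _ C_convex _ Cx0 p_le_n + Q_orth DQR Rhat Gm s Ps s_le.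
rewrite DQR => rank_QRm.
have [p0|p_gt0] := posnP p.
  subst p; rewrite /diamR big_ord0 expr0n /= !mulr0 [s]flatmx0.
  split=> [d _ _|]; first by rewrite /dotv big_ord0 normr0.
  by rewrite /mhat /fhat /dotv big_ord0 addr0 subrr normr0.
have L_ge0 : 0 <= Lg := lipschitz_euclid_ge0 (leq_trans p_gt0 p_le_n) gL.
have Rm_unit : Rm \in unitmx := unitmx_rank_mulmx rank_QRm.
have diam_gt0 : 0 < diamR Rm.
  apply: diamR_gt0; apply/eqP => Rm0.
  by move: rank_QRm; rewrite Rm0 mulmx0 mxrank0 => p0; rewrite -p0 in p_gt0.
split=> [d Pd d_le1|].
  exact: (model_gradient_error_le fg gL L_ge0 Q_orth Rm_unit diam_gt0 C_convex Cx0).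
exact: (model_value_error_le fg gL L_ge0 Q_orth Rm_unit diam_gt0 C_convex Cx0).
Qed.
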